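(* The insertion-sort strategy is efficient, and hence regret-free.
   Context: Let $\mathcal{X}$ be a finite set of alternatives. A proto-ranking is an irreflexive and transitive binary relation on $\mathcal{X}$; a ranking is a total proto-ranking; a tournament is a total and asymmetric binary relation on $\mathcal{X}$. The chair has a fixed preference $\succ$, which is a ranking on $\mathcal{X}$. Interaction: given a tournament $\mathrel{W}$ (the ''general will''), set $R_0=\varnothing$. In each period $t\geq 1$ in which $R_{t-1}$ is not total, the chair offers a pair $\{x,y\}$ of distinct alternatives that are unranked by $R_{t-1}$ (neither $x R_{t-1} y$ nor $y R_{t-1} x$); the winner is $x$ if $x \mathrel{W} y$ and $y$ otherwise, and $R_t$ is the transitive closure of $R_{t-1}\cup\{(\text{winner},\text{loser})\}$. The process stops when $R_t$ is total. A history is a finite sequence of ordered (winner, loser) pairs that can arise in this way (each offered pair unranked by the proto-ranking induced by the earlier pairs); it is terminal if its induced proto-ranking is total. A strategy of the chair assigns to each non-terminal history a pair of alternatives unranked at that history. The outcome of a strategy $\sigma$ under a tournament $\mathrel{W}$ is the final ranking produced. A ranking is $\mathrel{W}$-feasible if it is the outcome under $\mathrel{W}$ of some strategy. A ranking $R$ is more aligned with $\succ$ than a ranking $R'$ if for all $x,y$ with $x\succ y$, $x R' y$ implies $x R y$. A ranking is $\mathrel{W}$-unimprovable if no other $\mathrel{W}$-feasible ranking is more aligned with $\succ$ than it. A strategy is regret-free if for every tournament $\mathrel{W}$ its outcome under $\mathrel{W}$ is $\mathrel{W}$-unimprovable. A ranking $R$ is $\mathrel{W}$-efficient if $x\succ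 y$ and $x\mathrel{W} y$ imply $x R y$. A strategy is efficient if for every tournament $\mathrel{W}$ its outcome under $\mathrel{W}$ is $\mathrel{W}$-efficient. The insertion-sort strategy: after a history with current proto-ranking $R$, for each $z$ let $L(z)=\{w\in\mathcal{X}: z\succ w,\ \text{neither } zRw \text{ nor } wRz\}$. Let $x$ be the $\succ$-worst alternative with $L(x)\neq\varnothing$, and $y$ the $R$-highest element of $L(x)$ (i.e. $yRz$ for all $z\in L(x)\setminus\{y\}$; this is well defined). The strategy offers $\{x,y\}$. *)

From mathcomp Require Import all_boot.
Set Implicit Arguments. Unset Strict Implicit. Unset Printing Implicit Defensive.

Section Agenda.
Variable X : finType.

Definition irreflexive_rel (R : rel X) := forall x, ~~ R x x.
Definition transitive_rel (R : rel X) := forall x y z, R x y -> R y z -> R x z.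
Definition total_rel (R : rel X) := forall x y, x != y -> R x y || R y x.
Definition asymmetric_rel (R : rel X) := forall x y, R x y -> ~~ R y x.

Definition proto_ranking (R : rel X) := irreflexive_rel R /\ transitive_rel R.
Definition ranking (R : rel X) := proto_ranking R /\ total_rel R.
Definition tournament (W : rel X) := total_rel W /\ asymmetric_rel W.

(* A (candidate) history is a sequence of ordered (winner, loser) pairs. *)
Definition history_edges (h : seq (X * X)) : rel X := fun a b => (a, b) \in h.

(* The proto-ranking induced by h: the transitive closure of its pairs. *)
Definition induced (h : seq (X * X)) : rel X :=
  fun x y => [exists z, ((x, z) \in h) && connect (history_edges h) z y].

Definition unranked (R : rel X) (x y : X) := ~~ R x y && ~~ R y x.

Inductive history : seq (X * X) -> Prop :=
| history_nil : history [::]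
| history_rcons h a b :
    history h -> a != b -> unranked (induced h) a b -> history (rcons h (a, b)).

Definition terminal (h : seq (X * X)) : bool :=
  [forall x, forall y, (x != y) ==> (induced h x y || induced h y x)].

(* A strategy maps histories to offered pairs; [None] is only a filler value
   (e.g. at terminal histories). *)
Definition strategy_fun := seq (X * X) -> option (X * X).

Definition is_strategy (sigma : strategy_fun) :=
  forall h, history h -> ~~ terminal h ->
    exists x y, sigma h = Some (x, y) /\ x != y /\ unranked (induced h) x y.

Definition winner_loser (W : rel X) (x y : X) : X * X :=
  if W x y then (x, y) else (y, x).

Inductive generated (sigma : strategy_fun) (W : rel X) : seq (X * X) -> Prop :=
| gen_nil : generated sigma W [::]
| gen_step h x y :
    generated sigma W h -> ~~ terminal h -> sigma h = Some (x, y) ->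
    generated sigma W (rcons h (winner_loser W x y)).

Definition outcome (sigma : strategy_fun) (W : rel X) (R : rel X) :=
  exists h, generated sigma W h /\ terminal h /\ R =2 induced h.

Definition feasible (W : rel X) (R : rel X) :=
  exists sigma, is_strategy sigma /\ outcome sigma W R.

Variable pref : rel X. (* the chair's preference x ≻ y *)

Definition more_aligned (R R' : rel X) :=
  forall x y, pref x y -> R' x y -> R x y.

Definition unimprovable (W R : rel X) :=
  forall R', feasible W R' -> more_aligned R' R -> R' =2 R.

Definition regret_free (sigma : strategy_fun) :=
  forall W, tournament W -> forall R, outcome sigma W R -> unimprovable W R.

Definition W_efficient (W R : rel X) :=
  forall x y, pref x y -> W x y -> R x y.

Definition efficient (sigma : strategy_fun) :=
  forall W, tournament W -> forall R, outcome sigma W R -> W_efficient W R.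

Definition L_set (R : rel X) (z : X) : {set X} :=
  [set w | pref z w && unranked R z w].

Definition insertion_sort : strategy_fun := fun h =>
  let R := induced h in
  match [pick x | (L_set R x != set0) &&
                  [forall z, (L_set R z != set0) ==> (z == x) || pref z x]] with
  | None => None
  | Some x =>
    match [pick y | (y \in L_set R x) &&
                    [forall z, (z \in L_set R x) ==> (z == y) || R y z]] with
    | None => None
    | Some y => Some (x, y)
    end
  end.

End Agenda.

From mathcomp Require Import all_boot.
Set Implicit Arguments. Unset Strict Implicit. Unset Printing Implicit Defensive.

(* Insertion sort inserts the alternatives ≻-worst first: the alternative x being
   inserted is compared with the highest (in the current proto-ranking) alternative
   y that lies ≻-below x and is still unranked with x.  Along every run the
   proto-ranking R satisfies an invariant: only settled alternatives (those ranked
   against everything ≻-below them) are above anything, every alternative touched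
   so far lies weakly ≻-below all unsettled ones, and no pair u ≻ v with u W v is
   ever ranked v R u.  Since x and y have the same R-predecessors, adding the outcome
   of {x, y} preserves it; at termination its last clause is efficiency.
   Efficiency implies regret-freeness for any strategy: each pair decided along
   another feasible run follows W, so the efficient outcome ranks it the same way
   (by efficiency if it agrees with ≻, by alignment otherwise); that ranking is
   then contained in, hence equal to, the efficient one. *)

Section Extension.
Variable T : eqType.
Implicit Types (R : rel T) (a b : T).

Definition extend R a b : rel T :=
  fun u v => R u v || ((u == a) || R u a) && ((v == b) || R b v).

Lemma extend_sub R a b : subrel R (extend R a b).
Proof. by move=> u v Ruv; rewrite /extend Ruv. Qed.

Lemma extend_trans R a b : transitive R -> transitive (extend R a b).
Proof.
move=> R_tr v u w /orP [Ruv | /andP [ua bv]] /orP [Rvw | /andP [va bw]].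
- by rewrite /extend (R_tr _ _ _ Ruv Rvw).
- have Rua : R u a by case/orP: va => [/eqP <- // | Rva]; exact: R_tr Ruv Rva.
  by apply/orP; right; rewrite Rua bw orbT.
- have Rbw : R b w by case/orP: bv => [/eqP <- // | Rbv]; exact: R_tr Rbv Rvw.
  by apply/orP; right; rewrite ua Rbw orbT.
- by apply/orP; right; rewrite ua bw.
Qed.

Lemma extend_irreflexive R a b :
  irreflexive R -> transitive R -> a != b -> ~~ R b a -> irreflexive (extend R a b).
Proof.
move=> R_irr R_tr ab Rba u; rewrite /extend R_irr /=.
apply/negbTE/negP => /andP [ua bu].
have : (b == a) || R b a.
  case/orP: bu => [/eqP <- // | Rbu].
  case/orP: ua => [/eqP <- | Rua]; first by rewrite Rbu orbT.
  by rewrite (R_tr _ _ _ Rbu Rua) orbT.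
by rewrite eq_sym (negbTE ab) (negbTE Rba).
Qed.

Lemma extend_src R a b z d : extend R a b z d -> [\/ R z d, z = a | R z a].
Proof.
by case/orP => [Rzd | /andP [/orP [/eqP -> | Rza] _]]; [constructor 1 | constructor 2 | constructor 3].
Qed.

Lemma extend_touched R a b z w :
  extend R a b z w || extend R a b w z ->
  [\/ z = a, z = b | exists w', R z w' || R w' z].
Proof.
case/orP => [/orP [Rzw | /andP [/orP [/eqP -> | Rza] _]]
            | /orP [Rwz | /andP [_ /orP [/eqP -> | Rbz]]]].
- by constructor 3; exists w; rewrite Rzw.
- by constructor 1.
- by constructor 3; exists a; rewrite Rza.
- by constructor 3; exists w; rewrite Rwz orbT.
- by constructor 2.
- by constructor 3; exists b; rewrite Rbz orbT.
Qed.

End Extension.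

Lemma subrel_total_eq (T : eqType) (R R' : rel T) :
  subrel R' R -> (forall u v, u != v -> R' u v || R' v u) ->
  irreflexive R -> transitive R -> R' =2 R.
Proof.
move=> sub R'_tot R_irr R_tr u v; apply/idP/idP => [/sub // | Ruv].
have uv : u != v by apply: contraTneq Ruv => ->; rewrite R_irr.
case/orP: (R'_tot _ _ uv) => // /sub Rvu.
by move: (R_irr u); rewrite (R_tr _ _ _ Ruv Rvu).
Qed.

Lemma ex_rel_min (T : finType) (r : rel T) (S : {set T}) :
  transitive r -> {in S &, forall x y, x != y -> r x y || r y x} -> S != set0 ->
  exists2 y, y \in S & {in S, forall z, (z == y) || r y z}.
Proof.
move=> r_tr r_tot /set0Pn [s0 s0S].
pose le x y := (x == y) || r x y.
have le_tr : transitive le.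
  move=> y x z /orP [/eqP -> // | rxy] /orP [/eqP <- | ryz].
    by rewrite /le rxy orbT.
  by rewrite /le (r_tr _ _ _ rxy ryz) orbT.
have le_tot : {in enum S &, total le}.
  move=> x y; rewrite !mem_enum => xS yS; case: (eqVneq x y) => [-> | xy].
    by rewrite /le eqxx.
  by rewrite /le (negbTE xy) eq_sym (negbTE xy) /=; exact: r_tot.
case Es : (sort le (enum S)) (sort_sorted_in le_tot (allss (enum S))) => [|y s] le_s.
  by have := mem_sort le (enum S) s0; rewrite Es mem_enum s0S.
have yS : y \in S by rewrite -mem_enum -(mem_sort le) Es mem_head.
exists y => // z zS.
have : z \in y :: s by rewrite -Es mem_sort mem_enum.
rewrite inE => /orP [-> // | zs].
by have /allP/(_ z zs) := order_path_min le_tr le_s; rewrite /le eq_sym.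
Qed.

Section Induced.
Variable X : finType.
Implicit Types (h : seq (X * X)) (R : rel X).

Lemma induced_nil u v : induced (X:=X) [::] u v = false.
Proof. by apply/existsP => -[]. Qed.

Lemma induced_edge h a b : (a, b) \in h -> induced h a b.
Proof. by move=> ab; apply/existsP; exists b; rewrite ab connect0. Qed.

Lemma induced_trans h : transitive (induced h).
Proof.
move=> y x z /existsP [w /andP [xw wy]] /existsP [v /andP [yv vz]].
apply/existsP; exists w; rewrite xw (connect_trans wy) //.
exact: connect_trans (connect1 yv) vz.
Qed.

Lemma induced_min h R :
  (forall a b, (a, b) \in h -> R a b) -> transitive R -> subrel (induced h) R.
Proof.
move=> hR R_tr x y /existsP [z /andP [xz /connectP [p zp ->]]] {y}.
elim: p x z xz zp => [|w p IH] x z xz /=; first by move=> _; exact: hR.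
by case/andP => zw wp; exact: R_tr (hR _ _ xz) (IH _ _ zw wp).
Qed.

Lemma induced_rcons h a b : induced (rcons h (a, b)) =2 extend (induced h) a b.
Proof.
have edges u v : ((u, v) \in rcons h (a, b)) = ((u, v) \in h) || (u == a) && (v == b).
  by rewrite mem_rcons in_cons xpair_eqE orbC.
have sub : subrel (induced h) (induced (rcons h (a, b))).
  by apply: induced_min (@induced_trans _) => c d cd; apply: induced_edge; rewrite edges cd.
have ab : induced (rcons h (a, b)) a b by apply: induced_edge; rewrite edges !eqxx orbT.
have ext_edges c d : (c, d) \in rcons h (a, b) -> extend (induced h) a b c d.
  rewrite edges => /orP [/induced_edge /extend_sub // | /andP [/eqP -> /eqP ->]].
  by rewrite /extend !eqxx orbT.
move=> u v; apply/idP/idP.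
- by move/(induced_min ext_edges (extend_trans (@induced_trans h))).
- case/orP => [/sub // | /andP [ua bv]].
  have ub : induced (rcons h (a, b)) u b.
    by case/orP: ua => [/eqP -> // | /sub ua]; exact: induced_trans ua ab.
  by case/orP: bv => [/eqP -> // | /sub bv]; exact: induced_trans ub bv.
Qed.

Lemma terminal_total h u v : terminal h -> u != v -> induced h u v || induced h v u.
Proof. by move/forallP/(_ u)/forallP/(_ v)/implyP. Qed.

Lemma history_irreflexive h : history h -> irreflexive (induced h).
Proof.
elim => [|{}h a b _ IH ab /andP [Rab Rba]] u; first exact: induced_nil.
by rewrite induced_rcons (extend_irreflexive IH (@induced_trans h) ab Rba).
Qed.

Lemma generated_history sigma W h : is_strategy sigma -> generated sigma W h -> history h.
Proof.
move=> sigmaP; elim => [|{}h x y _ IH hnt hxy]; first exact: history_nil.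
have [x' [y' [sxy [xy unr]]]] := sigmaP h IH hnt.
move: sxy xy unr; rewrite hxy => -[<- <-] xy unr.
rewrite /winner_loser; case: ifP => _; apply: history_rcons => //; first by rewrite eq_sym.
by rewrite /unranked andbC.
Qed.

Lemma winner_loser_wins (W : rel X) x y :
  total_rel W -> x != y -> W (winner_loser W x y).1 (winner_loser W x y).2.
Proof.
move=> W_tot xy; rewrite /winner_loser; case: ifP => //= Wxy.
by move: (W_tot _ _ xy); rewrite Wxy.
Qed.

Lemma generated_edges_win sigma W h : total_rel W -> is_strategy sigma ->
  generated sigma W h -> forall u v, (u, v) \in h -> W u v.
Proof.
move=> W_tot sigmaP gen; elim: gen => [|{}h x y gen IH hnt hxy] // u v.
rewrite mem_rcons in_cons => /orP [/eqP uv | /IH //].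
have [x' [y' [sxy [xy _]]]] := sigmaP h (generated_history sigmaP gen) hnt.
move: sxy xy; rewrite hxy => -[<- <-] xy.
by have := winner_loser_wins W_tot xy; rewrite -uv.
Qed.

End Induced.

Section Preference.
Variables (X : finType) (pref : rel X).
Hypothesis pref_ranking : ranking pref.
Implicit Types (R W : rel X) (h : seq (X * X)).

Lemma pref_irr : irreflexive pref.
Proof. by case: pref_ranking => [[irr _] _] x; apply/negbTE. Qed.

Lemma pref_trans u v w : pref u v -> pref v w -> pref u w.
Proof. by case: pref_ranking => [[_ tr] _]; exact: tr. Qed.

Lemma pref_total u v : u != v -> pref u v || pref v u.
Proof. by case: pref_ranking => _ tot; exact: tot. Qed.

Lemma pref_asym u v : pref u v -> ~~ pref v u.
Proof. by move=> puv; apply/negP => /(pref_trans puv); rewrite pref_irr. Qed.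

Lemma pref_neq u v : pref u v -> u != v.
Proof. by move=> puv; apply: contraTneq puv => ->; rewrite pref_irr. Qed.

Lemma efficient_regret_free sigma :
  is_strategy sigma -> efficient pref sigma -> regret_free pref sigma.
Proof.
move=> sigmaP effP W W_tour R oR R' [sigma' [sigma'P [h' [gen' [term' eqR']]]]] aligned.
have effR := effP W W_tour R oR; have [W_tot _] := W_tour.
case: oR => h [gen [term eqR]].
have irr := history_irreflexive (generated_history sigmaP gen).
have irr' := history_irreflexive (generated_history sigma'P gen').
have edge_in_R u v : (u, v) \in h' -> induced h u v.
  move=> uv; have Wuv := generated_edges_win W_tot sigma'P gen' uv.
  have u_neq_v : u != v by apply: contraTneq (induced_edge uv) => ->; rewrite irr'.
  case/orP: (pref_total u_neq_v) => [puv | pvu]; first by rewrite -eqR; exact: effR.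
  case/orP: (terminal_total term u_neq_v) => // Rvu.
  have := aligned v u pvu; rewrite eqR eqR' => /(_ Rvu) R'vu.
  by move: (irr' u); rewrite (induced_trans (induced_edge uv) R'vu).
have sub : subrel (induced h') (induced h) := induced_min edge_in_R (@induced_trans _ h).
move=> u v; rewrite eqR eqR'.
by apply: subrel_total_eq sub _ irr (@induced_trans _ h) u v => a b; exact: terminal_total.
Qed.

Notation L := (L_set pref).

Definition settled R z := L R z == set0.

Definition insertee R x :=
  ~~ settled R x && [forall z, ~~ settled R z ==> (z == x) || pref z x].

Definition probe R x y :=
  (y \in L R x) && [forall z, (z \in L R x) ==> (z == y) || R y z].

Lemma settledP R z : reflect (forall w, pref z w -> R z w || R w z) (settled R z).
Proof.
apply: (iffP eqP) => [L0 w pzw | ranked].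
  apply/negPn/negP; rewrite negb_or => unr.
  have : w \in L R z by rewrite inE pzw; exact: unr.
  by rewrite L0 inE.
apply/setP => w; rewrite !inE /unranked -negb_or.
by case: (boolP (pref z w)) => //= /ranked ->.
Qed.

Lemma settled_sub R R' z : subrel R R' -> settled R z -> settled R' z.
Proof.
by move=> sub /settledP ranked; apply/settledP => w /ranked /orP [] /sub ->; rewrite ?orbT.
Qed.

Lemma settled_ranked R u w : settled R u -> settled R w -> u != w -> R u w || R w u.
Proof.
move=> /settledP su /settledP sw uw.
by case/orP: (pref_total uw) => [/su // | /sw]; rewrite orbC.
Qed.

Lemma L_set_eq R R' z : R =2 R' -> L R z = L R' z.
Proof. by move=> eqR; apply/setP => w; rewrite !inE /unranked !eqR. Qed.

Lemma settled_of_L R x w : insertee R x -> w \in L R x -> settled R w.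
Proof.
case/andP => _ /forallP xmin; rewrite inE => /andP [pxw _].
apply/negPn/negP => /(implyP (xmin w)) /orP [/eqP wx | pwx].
  by move: pxw; rewrite wx pref_irr.
by move: (pref_asym pxw); rewrite pwx.
Qed.

Lemma ex_insertee h : ~~ terminal h -> exists x, insertee (induced h) x.
Proof.
set R := induced h => nterm.
have [x xS xmin] : exists2 x, x \in [set z | ~~ settled R z] &
    {in [set z | ~~ settled R z], forall z, (z == x) || pref z x}.
  apply: (@ex_rel_min _ (fun a b => pref b a)) => [b a c ba cb | a b _ _ ab | ].
  - exact: pref_trans cb ba.
  - by rewrite orbC; exact: pref_total.
  - case/forallPn: nterm => u /forallPn [v]; rewrite negb_imply negb_or => /andP [uv unr].
    apply/set0Pn; case/orP: (pref_total uv) => [puv | pvu].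
    + by exists u; rewrite inE; apply/set0Pn; exists v; rewrite inE puv; exact: unr.
    + exists v; rewrite inE; apply/set0Pn; exists u.
      by rewrite inE pvu /= /unranked andbC; exact: unr.
rewrite inE in xS; exists x; apply/andP; split => //.
by apply/forallP => z; apply/implyP => zS; apply: xmin; rewrite inE.
Qed.

Lemma ex_probe R x : transitive R -> insertee R x -> exists y, probe R x y.
Proof.
move=> R_tr xP; have /andP [x_unsettled _] := xP.
have L_total : {in L R x &, forall u w, u != w -> R u w || R w u}.
  by move=> u w uL wL; apply: settled_ranked; exact: settled_of_L xP _.
have [y yL ymax] := ex_rel_min R_tr L_total x_unsettled.
exists y; apply/andP; split => //.
by apply/forallP => z; apply/implyP; exact: ymax.
Qed.

Lemma insertion_sort_spec h x y : insertion_sort pref h = Some (x, y) ->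
  insertee (induced h) x /\ probe (induced h) x y.
Proof. by rewrite /insertion_sort; case: pickP => // x' x'P; case: pickP => // y' y'P [<- <-]. Qed.

Lemma insertion_sort_defined h : ~~ terminal h ->
  exists x y, insertion_sort pref h = Some (x, y).
Proof.
move=> nterm; have [x xP] := ex_insertee nterm.
rewrite /insertion_sort; case: pickP => [x' x'P | /(_ x)/negbT/negP/(_ xP) //].
have [y yP] := ex_probe (@induced_trans _ h) x'P.
by case: pickP => [y' _ | /(_ y)/negbT/negP/(_ yP) //]; exists x', y'.
Qed.

Lemma insertion_sort_strategy : is_strategy (insertion_sort pref).
Proof.
move=> h _ nterm; have [x [y xy]] := insertion_sort_defined nterm.
have [_ /andP [yL _]] := insertion_sort_spec xy.
move: yL; rewrite inE => /andP [pxy unr].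
by exists x, y; split; last split; [| exact: pref_neq |].
Qed.

Definition insertion_invariant W R :=
  [/\ forall u v, pref u v -> W u v -> ~~ R v u,
      forall z w, R z w -> settled R z &
      forall z w u, R z w || R w z -> ~~ settled R u -> (u == z) || pref u z].

Lemma insertion_invariant_eq W R R' :
  R' =2 R -> insertion_invariant W R -> insertion_invariant W R'.
Proof.
move=> eqR [inv1 inv2 inv3]; split => [u v | z w | z w u];
  rewrite /settled ?(L_set_eq _ eqR) !eqR; [exact: inv1 | exact: inv2 | exact: inv3].
Qed.

Section InsertionStep.
Variables (W R : rel X) (x y : X).
Hypotheses (R_irr : irreflexive R) (R_tr : transitive R).
Hypothesis R_inv : insertion_invariant W R.
Hypotheses (xP : insertee R x) (yP : probe R x y).

Lemma insertee_unsettled : ~~ settled R x.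
Proof. by case/andP: xP. Qed.

Lemma insertee_min u : ~~ settled R u -> (u == x) || pref u x.
Proof. by case/andP: xP => _ /forallP/(_ u)/implyP. Qed.

Lemma probe_L : y \in L R x.
Proof. by case/andP: yP. Qed.

Lemma probe_max z : z \in L R x -> (z == y) || R y z.
Proof. by case/andP: yP => _ /forallP/(_ z)/implyP. Qed.

Lemma pref_insertee_probe : pref x y.
Proof. by have := probe_L; rewrite inE => /andP []. Qed.

Lemma probe_unranked : ~~ R x y && ~~ R y x.
Proof. by have := probe_L; rewrite inE => /andP []. Qed.

Lemma insertee_loses d : ~~ R x d.
Proof.
have [_ inv2 _] := R_inv; apply/negP => /inv2 xs.
by move: insertee_unsettled; rewrite xs.
Qed.

Lemma probe_settled : settled R y.
Proof. exact: settled_of_L xP probe_L. Qed.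

Lemma probe_bound u : ~~ settled R u -> (u == y) || pref u y.
Proof.
move/insertee_min => /orP [/eqP -> | pux]; first by rewrite pref_insertee_probe orbT.
by rewrite (pref_trans pux pref_insertee_probe) orbT.
Qed.

Lemma above_insertee c : R c x = R c y.
Proof.
have [_ inv2 _] := R_inv; have /andP [Rxy Ryx] := probe_unranked.
apply/idP/idP => [Rcx | Rcy].
  have cy : c != y by apply: contraNneq Ryx => <-.
  case/orP: (settled_ranked (inv2 _ _ Rcx) probe_settled cy) => // Ryc.
  by move: Ryx; rewrite (R_tr Ryc Rcx).
have cx : c != x by apply: contraNneq Rxy => <-.
case/orP: (pref_total cx) => [pcx | pxc].
  have /settledP/(_ x pcx) := inv2 _ _ Rcy.
  by rewrite (negbTE (insertee_loses c)) orbF.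
case Rcx: (R c x) => //.
have cL : c \in L R x by rewrite inE pxc /unranked insertee_loses Rcx.
case/orP: (probe_max cL) => [/eqP cy | Ryc].
  by move: Rcy; rewrite cy R_irr.
by move: (R_irr y); rewrite (R_tr Ryc Rcy).
Qed.

Lemma touched_extend_bound a b :
  (forall u, ~~ settled R u -> (u == a) || pref u a) ->
  (forall u, ~~ settled R u -> (u == b) || pref u b) ->
  forall z w u, extend R a b z w || extend R a b w z ->
    ~~ settled (extend R a b) u -> (u == z) || pref u z.
Proof.
have [_ _ inv3] := R_inv.
move=> ha hb z w u /extend_touched [-> | -> | [w' t]]
  /(contra (settled_sub (@extend_sub _ R a b))) uns.
- exact: ha.
- exact: hb.
- exact: inv3 t uns.
Qed.

Lemma invariant_insertee_wins : W x y -> insertion_invariant W (extend R x y).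
Proof.
move=> Wxy; have [inv1 inv2 inv3] := R_inv; have /andP [Rxy Ryx] := probe_unranked.
split.
- move=> u v puv Wuv; rewrite /extend negb_or (inv1 _ _ puv Wuv) /=.
  apply/negP => /andP [/orP [/eqP vx | Rvx] yu].
    subst v; case/orP: yu => [/eqP uy | Ryu].
      by move: (pref_asym pref_insertee_probe); rewrite -uy puv.
    have := inv3 u y x; rewrite Ryu orbT => /(_ isT insertee_unsettled).
    case/orP => [/eqP xu | pxu]; first by move: Ryx; rewrite xu Ryu.
    by move: (pref_asym puv); rewrite pxu.
  rewrite above_insertee in Rvx.
  have Rvu : R v u by case/orP: yu => [/eqP -> // | Ryu]; exact: R_tr Rvx Ryu.
  by move: (inv1 _ _ puv Wuv); rewrite Rvu.
- have x_settled : settled (extend R x y) x.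
    apply/settledP => w pxw; rewrite /extend eqxx /=.
    case: (boolP (w \in L R x)) => [/probe_max -> | ]; first by rewrite orbT.
    by rewrite inE pxw /= /unranked negb_and !negbK => /orP [] ->; rewrite /= ?orbT.
  move=> z d /extend_src [/inv2 | -> // | /inv2]; exact: settled_sub (@extend_sub _ R x y).
- exact: touched_extend_bound insertee_min probe_bound.
Qed.

Lemma invariant_probe_wins : ~~ W x y -> insertion_invariant W (extend R y x).
Proof.
move=> NWxy; have [inv1 inv2 inv3] := R_inv.
split.
- move=> u v puv Wuv.
  rewrite /extend negb_or (inv1 _ _ puv Wuv) (negbTE (insertee_loses u)) orbF /=.
  apply/negP => /andP [/orP [/eqP vy | Rvy] /eqP ux]; subst u.
    by subst v; rewrite Wuv in NWxy.
  by move: (inv1 _ _ puv Wuv); rewrite above_insertee Rvy.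
- have y_settled := settled_sub (@extend_sub _ R y x) probe_settled.
  move=> z d /extend_src [/inv2 | -> // | /inv2]; exact: settled_sub (@extend_sub _ R y x).
- exact: touched_extend_bound probe_bound insertee_min.
Qed.

End InsertionStep.

Lemma generated_invariant W h :
  generated (insertion_sort pref) W h -> insertion_invariant W (induced h).
Proof.
elim => [|{}h x y gen IH _ hxy].
  by split=> [u v _ _ | z w | z w u]; rewrite ?induced_nil.
have [xP yP] := insertion_sort_spec hxy.
have R_irr := history_irreflexive (generated_history insertion_sort_strategy gen).
have R_tr := @induced_trans _ h.
rewrite /winner_loser; case: ifP => Wxy; apply: insertion_invariant_eq (induced_rcons _ _ _) _.
  exact: invariant_insertee_wins.
by apply: invariant_probe_wins => //; rewrite Wxy.
Qed.

Lemma insertion_sort_efficient : efficient pref (insertion_sort pref).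
Proof.
move=> W _ R [h [gen [term eqR]]] u v puv Wuv; rewrite eqR.
have [inv1 _ _] := generated_invariant gen.
case/orP: (terminal_total term (pref_neq puv)) => // Rvu.
by move: (inv1 _ _ puv Wuv); rewrite Rvu.
Qed.

End Preference.

Theorem theorem1 (X : finType) (pref : rel X) :
  ranking pref ->
  is_strategy (insertion_sort pref) /\
  efficient pref (insertion_sort pref) /\
  regret_free pref (insertion_sort pref).
Proof.
move=> pref_ranking.
have strategy := insertion_sort_strategy pref_ranking.
have eff := insertion_sort_efficient pref_ranking.
by split; [|split; [|exact: efficient_regret_free]].
Qed.
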